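(* Let $R$ be a ring. If there exists a finitely generated flat left $R$-module which is not projective, then the ring $Q_l(R)$ is not semi-simple.
   Context: Rings are associative with $1$. A multiplicatively closed subset $S$ ($1\in S$, $0\notin S$) is a left Ore set if $Sr\cap Rs\ne\emptyset$ for all $r\in R,s\in S$, and a left denominator set if moreover $rs=0$ ($s\in S$) implies $tr=0$ for some $t\in S$. $S_0(R)$ is the largest left denominator set of $R$ consisting of regular elements (it exists), and $Q_l(R):=S_0(R)^{-1}R$ is the largest left quotient ring of $R$. *)

From HB Require Import structures.
From mathcomp Require Import all_boot all_algebra.
Set Implicit Arguments. Unset Strict Implicit. Unset Printing Implicit Defensive.
Import GRing.Theory.
Local Open Scope ring_scope.

(* Rings are associative with 1 (possibly noncommutative): pzRingType.
   Left R-modules: lmodType R.  Right R-modules: lmodType R^c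
   (the right action n.r is written r *: n). *)

Definition is_lin (K : pzRingType) (M N : lmodType K) (f : M -> N) : Prop :=
  forall (r : K) (x y : M), f (r *: x + y) = r *: f x + f y.

Definition fin_gen (R : pzRingType) (M : lmodType R) : Prop :=
  exists s : seq M, forall x : M,
    exists c : 'I_(size s) -> R, x = \sum_(i < size s) c i *: s`_i.

Definition projective (R : pzRingType) (M : lmodType R) : Prop :=
  forall (A B : lmodType R) (g : A -> B) (h : M -> B),
    is_lin g -> is_lin h -> (forall b, exists a, g a = b) ->
    exists k : M -> A, is_lin k /\ forall x, g (k x) = h x.

Definition balanced (R : pzRingType) (N : lmodType R^c) (M : lmodType R)
  (A : zmodType) (b : N -> M -> A) : Prop :=
  [/\ forall n1 n2 m, b (n1 + n2) m = b n1 m + b n2 m,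
      forall n m1 m2, b n (m1 + m2) = b n m1 + b n m2 &
      forall (r : R) n m, b ((r : R^c) *: n) m = b n (r *: m)].

(* The element sum_i n_i (x) m_i of N (x)_R M (given by the list s of pairs)
   is zero; by the universal property of the tensor product this holds iff
   every balanced map kills it. *)
Definition tensor_zero (R : pzRingType) (N : lmodType R^c) (M : lmodType R)
  (s : seq (N * M)) : Prop :=
  forall (A : zmodType) (b : N -> M -> A), balanced b ->
    \sum_(p <- s) b p.1 p.2 = 0.

(* Flat left module: for every injective map f : N' -> N of right modules,
   f (x) id_M : N' (x) M -> N (x) M is injective (every element of N'(x)M is
   of the form sum_i n_i (x) m_i). *)
Definition flat (R : pzRingType) (M : lmodType R) : Prop :=
  forall (N' N : lmodType R^c) (f : N' -> N), is_lin f -> injective f ->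
    forall s : seq (N' * M),
      tensor_zero (map (fun p => (f p.1, p.2)) s) -> tensor_zero s.

Definition regular (R : pzRingType) (s : R) : Prop :=
  (forall r, r * s = 0 -> r = 0) /\ (forall r, s * r = 0 -> r = 0).

Definition mult_closed (R : pzRingType) (S : R -> Prop) : Prop :=
  [/\ S 1, ~ S 0 & forall a b, S a -> S b -> S (a * b)].

Definition left_ore (R : pzRingType) (S : R -> Prop) : Prop :=
  mult_closed S /\
  forall (r s : R), S s -> exists s' r', S s' /\ s' * r = r' * s.

Definition left_denominator (R : pzRingType) (S : R -> Prop) : Prop :=
  left_ore S /\
  forall (r s : R), S s -> r * s = 0 -> exists t, S t /\ t * r = 0.

Definition is_S0 (R : pzRingType) (S : R -> Prop) : Prop :=
  [/\ left_denominator S, (forall s, S s -> regular s) &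
      forall T : R -> Prop, left_denominator T -> (forall t, T t -> regular t) ->
        forall t, T t -> S t].

Definition ring_hom (R Q : pzRingType) (f : R -> Q) : Prop :=
  [/\ forall x y, f (x + y) = f x + f y,
      forall x y, f (x * y) = f x * f y & f 1 = 1].

Definition left_quotient_ring (R Q : pzRingType) (S : R -> Prop) (sigma : R -> Q)
  : Prop :=
  [/\ ring_hom sigma, injective sigma,
      (forall s, S s -> exists u, u * sigma s = 1 /\ sigma s * u = 1) &
      forall q : Q, exists s r, S s /\ sigma s * q = sigma r].

Definition left_ideal (Q : pzRingType) (I : Q -> Prop) : Prop :=
  [/\ I 0, (forall x y, I x -> I y -> I (x + y)) &
      forall a x, I x -> I (a * x)].

Definition semisimple_ring (Q : pzRingType) : Prop :=
  forall I : Q -> Prop, left_ideal I ->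
    exists J : Q -> Prop, [/\ left_ideal J,
      (forall x, I x -> J x -> x = 0) &
      forall x, exists a b, [/\ I a, J b & x = a + b]].

From HB Require Import structures.
From mathcomp Require Import all_boot all_algebra generic_quotient boolp.
Set Implicit Arguments. Unset Strict Implicit. Unset Printing Implicit Defensive.
Import GRing.Theory.
Local Open Scope ring_scope.

(* Only the embedding sigma : R -> Q of R into its left quotient ring matters:
   if R embeds in a semisimple ring Q, every finitely generated flat left
   R-module M is projective.  Present M by generators v_1, ..., v_n and let K
   be the module of relations in R^n.  Since Q is semisimple, left submodules
   of Q^n are finitely generated, so the Q-span of sigma(K) is spanned by
   sigma of finitely many relations, the rows of a matrix X.  Flatness of M
   (the equational criterion) yields Z : R^(n x n) with X Z = 0 and v = Z v.
   Every relation k satisfies sigma(k) = q sigma(X), hence sigma(k Z) = 0 and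
   k Z = 0; so c |-> c Z induces a splitting M -> R^n of the presentation and
   M is a direct summand of R^n. *)

Section RingHom.
Variables (R Q : pzRingType) (f : R -> Q).
Hypothesis f_hom : ring_hom f.

Lemma ring_hom_nmod_morphism : nmod_morphism f.
Proof.
have [fD _ _] := f_hom; split=> //.
by apply: (@addrI _ (f 0)); rewrite -fD !addr0.
Qed.

Lemma ring_hom_monoid_morphism : monoid_morphism f.
Proof. by have [_ fM f1] := f_hom. Qed.

Definition rmorph_of_ring_hom : {rmorphism R -> Q} :=
  HB.pack f (GRing.isNmodMorphism.Build _ _ f ring_hom_nmod_morphism)
    (GRing.isMonoidMorphism.Build _ _ f ring_hom_monoid_morphism).

End RingHom.

Lemma is_lin_sum (R : pzRingType) (A B : lmodType R) (g : A -> B) :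
  is_lin g -> forall n (c : 'I_n -> R) (a : 'I_n -> A),
  g (\sum_j c j *: a j) = \sum_j c j *: g (a j).
Proof.
move=> g_lin n c a.
pose gL : {linear A -> B} := HB.pack g (GRing.isLinear.Build R A B *:%R g g_lin).
by rewrite -[g]/(gL : A -> B) linear_sum; apply: eq_bigr => j _; exact: linearZ.
Qed.

Definition comb (R : pzRingType) (M : lmodType R) n (v : 'I_n -> M) (c : 'rV[R]_n) : M :=
  \sum_j c 0 j *: v j.

Lemma comb_is_linear (R : pzRingType) (M : lmodType R) n (v : 'I_n -> M) :
  linear (comb v).
Proof.
move=> a c d; rewrite /comb scaler_sumr -big_split /=; apply: eq_bigr => j _.
by rewrite !mxE scalerDl scalerA.
Qed.

HB.instance Definition _ (R : pzRingType) (M : lmodType R) n (v : 'I_n -> M) :=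
  GRing.isLinear.Build R 'rV[R]_n M *:%R (comb v) (comb_is_linear v).

Lemma comb_row (R : pzRingType) (M : lmodType R) m n (v : 'I_n -> M)
    (X : 'M[R]_(m, n)) i :
  comb v (row i X) = \sum_j X i j *: v j.
Proof. by apply: eq_bigr => j _; rewrite mxE. Qed.

Definition rV_submodule (Q : pzRingType) n (P : 'rV[Q]_n -> Prop) :=
  [/\ P 0, forall x y, P x -> P y -> P (x + y) & forall a x, P x -> P (a *: x)].

Definition mx_within (Q : pzRingType) m n (X : 'M[Q]_(m, n)) (P : 'rV[Q]_n -> Prop) :=
  forall q, P (q *m X).

Definition spans (Q : pzRingType) m n (G : 'M[Q]_(m, n)) (P : 'rV[Q]_n -> Prop) :=
  mx_within G P /\ forall x, P x -> exists q, x = q *m G.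

Lemma comb_kernel_submodule (R : pzRingType) (M : lmodType R) n (v : 'I_n -> M) :
  rV_submodule (fun k => comb v k = 0).
Proof.
split=> [|x y x0 y0|a x x0]; first exact: linear0.
  by rewrite linearD /= x0 y0 addr0.
by rewrite linearZ /= x0 scaler0.
Qed.

Lemma mx_within_col_mx (Q : pzRingType) m1 m2 n (P : 'rV[Q]_n -> Prop)
    (X1 : 'M_(m1, n)) (X2 : 'M_(m2, n)) :
  rV_submodule P -> mx_within X1 P -> mx_within X2 P -> mx_within (col_mx X1 X2) P.
Proof. by move=> [_ PD _] P1 P2 q; rewrite -[q]hsubmxK mul_row_col; apply: PD. Qed.

Section SemisimpleRing.
Variable Q : pzRingType.
Hypothesis Q_ss : semisimple_ring Q.

Lemma semisimple_left_ideal_idempotent (I : Q -> Prop) :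
  left_ideal I -> exists2 e, I e & forall a, I a -> a = a * e.
Proof.
move=> I_ideal; have [J [[J0 JD JM] IJ0 IJ]] := Q_ss I_ideal.
have [I0 ID IM] := I_ideal; have [e [f [Ie Jf ef]]] := IJ 1.
exists e => // a Ia.
have af0 : a * f = 0.
  apply: IJ0; last exact: JM.
  have -> : a * f = a + (-1) * (a * e).
    by rewrite mulN1r -[X in X - _]mulr1 ef mulrDr addrAC subrr add0r.
  by apply: ID => //; apply: (IM); apply: IM.
by rewrite -[a in LHS]mulr1 ef mulrDr af0 addr0.
Qed.

(* Induction on n: the first coordinates of P form a left ideal Q e, and the
   vectors of P with first coordinate 0 form a submodule of Q^(n-1). *)
Lemma semisimple_rV_fin_gen n (P : 'rV[Q]_n -> Prop) :
  rV_submodule P -> exists m (G : 'M[Q]_(m, n)), spans G P.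
Proof.
elim: n P => [|n IH].
  move=> P [P0 _ _]; exists 0%N, 0; split=> [q|x _]; first by rewrite mulmx0.
  by exists 0; rewrite mulmx0; exact: thinmx0.
rewrite -[n.+1]/(1 + n)%N => P [P0 PD PZ].
pose P' (z : 'rV[Q]_n) := P (row_mx 0 z).
have [|m' [G' [G'P G'span]]] := IH P'.
  split=> [|x y Px Py|a x Px]; rewrite /P' ?row_mx0 //.
    by rewrite -[0 : 'rV_1]addr0 -add_row_mx; apply: PD.
  by rewrite -(scaler0 _ a) -scale_row_mx; apply: PZ.
have PN x : P x -> P (- x) by move=> Px; rewrite -scaleN1r; apply: PZ.
pose I (a : Q) := exists2 y, P y & y 0 0 = a.
have I_ideal : left_ideal I.
  split; first by exists 0; rewrite ?mxE.
    by move=> _ _ [y Py <-] [z Pz <-]; exists (y + z); [exact: PD | rewrite mxE].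
  by move=> a _ [y Py <-]; exists (a *: y); [exact: PZ | rewrite mxE].
have [_ [y Py <-] yK] := semisimple_left_ideal_idempotent I_ideal.
exists (1 + m')%N, (col_mx y (row_mx 0 G')); split.
  move=> q; rewrite -[q]hsubmxK mul_row_col mul_mx_row mulmx0.
  apply: PD; last exact: G'P.
  by rewrite [lsubmx q]mx11_scalar mul_scalar_mx; apply: PZ.
move=> x Px; pose a := x 0 0.
have aK : a = a * y 0 0 by apply: yK; exists x.
pose x' := x - a *: y.
have Px' : P x' by apply: PD => //; apply: PN; apply: PZ.
have x'0 : x' 0 0 = 0 by rewrite !mxE -aK subrr.
have x'E : x' = row_mx 0 (rsubmx x').
  rewrite -[x' in LHS]hsubmxK; congr row_mx.
  apply/matrixP => i j; rewrite !ord1 [RHS]mxE mxE (_ : lshift n 0 = 0) //.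
  exact: val_inj.
have [|q' x'q'] := G'span (rsubmx x'); first by rewrite /P' -x'E.
exists (row_mx a%:M q').
by rewrite mul_row_col mul_mx_row mulmx0 mul_scalar_mx -x'q' -x'E /x' addrC subrK.
Qed.

End SemisimpleRing.

Section SpanImage.
Variables (R Q : pzRingType) (f : {rmorphism R -> Q}) (n : nat).
Variables (K : 'rV[R]_n -> Prop) (K_sub : rV_submodule K).

Definition span_image (x : 'rV[Q]_n) :=
  exists m (X : 'M[R]_(m, n)), mx_within X K /\ exists q, x = q *m map_mx f X.

Lemma span_image_submodule : rV_submodule span_image.
Proof.
have [K0 _ _] := K_sub.
split.
- by exists 0%N, 0; split=> [q|]; [rewrite mulmx0 | exists 0; rewrite mul0mx].
- move=> _ _ [m1 [X1 [K1 [q1 ->]]]] [m2 [X2 [K2 [q2 ->]]]].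
  exists (m1 + m2)%N, (col_mx X1 X2); split; first exact: mx_within_col_mx.
  by exists (row_mx q1 q2); rewrite map_col_mx mul_row_col.
- move=> a _ [m1 [X1 [K1 [q1 ->]]]]; exists m1, X1; split => //.
  by exists (a *: q1); rewrite scalemxAl.
Qed.

Lemma span_image_mx m (G : 'M[Q]_(m, n)) :
  (forall i, span_image (row i G)) ->
  exists m' (X : 'M[R]_(m', n)), mx_within X K /\
    forall q : 'rV_m, exists q' : 'rV_m', q *m G = q' *m map_mx f X.
Proof.
elim: m G => [|m IH] G G_span.
  exists 0%N, 0; split=> [q|q]; first by rewrite mulmx0; case: K_sub.
  by exists 0; rewrite [G]flatmx0 mulmx0 mul0mx.
move: G G_span; rewrite -[m.+1]/(1 + m)%N => G G_span.
have [|m2 [X2 [K2 X2span]]] := IH (dsubmx G).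
  by move=> i; rewrite row_dsubmx; exact: G_span.
have [m1 [X1 [K1 [q1 Gq1]]]] := G_span (lshift m 0).
exists (m1 + m2)%N, (col_mx X1 X2); split; first exact: mx_within_col_mx.
move=> q; have [q' Gq'] := X2span (rsubmx q).
exists (row_mx (lsubmx q *m q1) q').
rewrite map_col_mx mul_row_col -Gq' -mulmxA -Gq1 -(row_usubmx G 0) row_id.
by rewrite -mul_row_col hsubmxK vsubmxK.
Qed.

Lemma semisimple_span_image : semisimple_ring Q ->
  exists m (X : 'M[R]_(m, n)), mx_within X K /\
    forall k, K k -> exists q, map_mx f k = q *m map_mx f X.
Proof.
move=> Q_ss.
have [m [G [G_span spanG]]] := semisimple_rV_fin_gen Q_ss span_image_submodule.
have [m' [X [KX GX]]] : exists m' (X : 'M[R]_(m', n)), mx_within X K /\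
    forall q : 'rV_m, exists q' : 'rV_m', q *m G = q' *m map_mx f X.
  by apply: span_image_mx => i; rewrite rowE; apply: G_span.
exists m', X; split=> // k Kk; have [_ _ KZ] := K_sub.
have [|q ->] := spanG (map_mx f k); last exact: GX.
exists 1%N, k; split; last by exists 1; rewrite mul1mx.
by move=> q; rewrite [q]mx11_scalar mul_scalar_mx; apply: KZ.
Qed.

End SpanImage.

Section ZmodQuotient.
Variables (V : zmodType) (L : V -> Prop).
Hypotheses (L0 : L 0) (LB : forall x y, L x -> L y -> L (x - y)).

Definition quot_pred : {pred V} := fun x => `[< L x >].

Fact quot_pred_closed : zmod_closed quot_pred.
Proof.
split=> [|x y /asboolP Lx /asboolP Ly]; apply/asboolP; first exact: L0.
exact: LB.
Qed.

HB.instance Definition _ := GRing.isZmodClosed.Build V quot_pred quot_pred_closed.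

Lemma zmod_quotient :
  exists (A : zmodType) (pi : {additive V -> A}), forall x, pi x = 0 <-> L x.
Proof.
exists (Quotient.quot quot_pred).
exists (@pi _ (Quotient.quot quot_pred) : {additive _ -> _}) => x.
have := Quotient.idealrBE quot_pred x 0; rewrite subr0 => memE; split.
  move=> pix0; suff : x \in quot_pred by move/asboolP.
  rewrite memE; apply/eqP.
  by rewrite [LHS]pix0 -(raddf0 (@pi _ (Quotient.quot quot_pred))).
move=> Lx; have : x \in quot_pred by apply/asboolP.
rewrite memE => /eqP pix; change (@pi _ (Quotient.quot quot_pred) x = 0).
by rewrite pix raddf0.
Qed.
End ZmodQuotient.

Section MxImage.
Variables (T : pzRingType) (n m : nat) (Y : 'M[T]_(n, m)).

Definition in_mx_image : {pred 'rV[T]_m} := fun y => `[< exists w, y = w *m Y >].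

Fact in_mx_image_closed : subsemimod_closed in_mx_image.
Proof.
split; first split.
- by apply/asboolP; exists 0; rewrite mul0mx.
- move=> _ _ /asboolP[w ->] /asboolP[w' ->]; apply/asboolP.
  by exists (w + w'); rewrite mulmxDl.
- move=> a _ /asboolP[w ->]; apply/asboolP; exists (a *: w); exact: scalemxAl.
Qed.

HB.instance Definition _ :=
  GRing.isSubmodClosed.Build T 'rV[T]_m in_mx_image in_mx_image_closed.

Definition mx_image := {y : 'rV[T]_m | y \in in_mx_image}.
HB.instance Definition _ := Choice.on mx_image.
HB.instance Definition _ := [isSub of mx_image for @sval _ _].
HB.instance Definition _ := [SubChoice_isSubZmodule of mx_image by <:].
HB.instance Definition _ := [SubZmodule_isSubLmodule of mx_image by <:].

Lemma mx_image_preimage (y : mx_image) : exists w, val y = w *m Y.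
Proof. by case: y => y /= /asboolP. Qed.

Lemma val_mx_image_lin : is_lin (val : mx_image -> 'rV[T]_m).
Proof. by move=> r x y; rewrite GRing.valD GRing.valZ. Qed.

Definition mx_image_of (w : 'rV[T]_n) : mx_image :=
  exist _ (w *m Y) (introT (asboolP _) (ex_intro _ w erefl)).

End MxImage.

(* [tens w x] is the image of w (x) x under the isomorphism R^n (x)_R M = M^n. *)
Definition tens (R : pzRingType) (M : lmodType R) n (w : 'rV[R^c]_n) (x : M) :
  'rV[M]_n :=
  \row_j ((w 0 j : R) *: x).

Section Tens.
Variables (R : pzRingType) (M : lmodType R) (n : nat).

Lemma tensDl (w w' : 'rV[R^c]_n) (x : M) : tens (w + w') x = tens w x + tens w' x.
Proof. by apply/rowP => j; rewrite !mxE scalerDl. Qed.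

Lemma tensBl (w w' : 'rV[R^c]_n) (x : M) : tens (w - w') x = tens w x - tens w' x.
Proof. by apply/rowP => j; rewrite !mxE scalerBl. Qed.

Lemma tensDr (w : 'rV[R^c]_n) (x x' : M) : tens w (x + x') = tens w x + tens w x'.
Proof. by apply/rowP => j; rewrite !mxE scalerDr. Qed.

Lemma tensZ (r : R) (w : 'rV[R^c]_n) (x : M) : tens ((r : R^c) *: w) x = tens w (r *: x).
Proof. by apply/rowP => j; rewrite !mxE scalerA. Qed.

Lemma sum_tens_delta (v : 'I_n -> M) : \sum_j tens 'e_j (v j) = \row_j v j.
Proof.
apply/rowP => l; rewrite summxE (bigD1 l) //= !mxE !eqxx scale1r big1 ?addr0 //.
by move=> j jl; rewrite !mxE eq_sym (negbTE jl) scale0r.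
Qed.

End Tens.

Section Flat.
Variables (R : pzRingType) (M : lmodType R) (n : nat) (v : 'I_n -> M).

Lemma tensor_zero_relations m (X : 'M[R]_(m, n)) :
  mx_within X (fun k => comb v k = 0) ->
  tensor_zero [seq ((delta_mx 0 j : 'rV[R^c]_n) *m X^T, v j) | j <- index_enum 'I_n].
Proof.
move=> relX A b [bDl bDr bZ].
have b0l x : b 0 x = 0 by apply: (@addrI _ (b 0 x)); rewrite -bDl !addr0.
have b0r y : b y 0 = 0 by apply: (@addrI _ (b y 0)); rewrite -bDr !addr0.
have eXT j : (delta_mx 0 j : 'rV[R^c]_n) *m X^T = \sum_i (X i j : R^c) *: 'e_i.
  by rewrite -rowE [LHS]row_sum_delta; apply: eq_bigr => i _; rewrite !mxE.
rewrite big_map /=.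
transitivity (\sum_j \sum_i b 'e_i (X i j *: v j)).
  apply: eq_bigr => j _.
  rewrite eXT (big_morph (b^~ (v j)) (fun y y' => bDl y y' (v j)) (b0l (v j))).
  by apply: eq_bigr => i _; rewrite bZ.
rewrite exchange_big big1 //= => i _.
rewrite -(big_morph (b 'e_i) (bDr 'e_i) (b0r 'e_i)) -comb_row rowE.
by rewrite relX b0r.
Qed.

Hypothesis v_gen : forall x, exists c, x = comb v c.
Hypothesis M_flat : flat M.

(* The image of ker(X) (x) M in M^n, for X acting on column vectors. *)
Definition ker_tensor m (X : 'M[R]_(m, n)) (x : 'rV[M]_n) :=
  exists2 Z : 'M[R]_n, X *m Z = 0 & forall l, x 0 l = comb v (row l Z).

Lemma flat_relations m (X : 'M[R]_(m, n)) :
  mx_within X (fun k => comb v k = 0) ->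
  exists2 Z : 'M[R]_n, X *m Z = 0 & forall l, comb v (row l Z) = v l.
Proof.
move=> relX; pose Y : 'M[R^c]_(n, m) := X^T.
have [A [pi piE]] : exists (A : zmodType) (pi : {additive 'rV[M]_n -> A}),
    forall x, pi x = 0 <-> ker_tensor X x.
  apply: zmod_quotient.
    by exists 0 => [|l]; rewrite ?mulmx0 // mxE row0 linear0.
  move=> x y [Z1 XZ1 xE] [Z2 XZ2 yE]; exists (Z1 - Z2).
    by rewrite mulmxBr XZ1 XZ2 subrr.
  by move=> l; rewrite !mxE xE yE raddfB linearB.
have tens_ker w x : w *m Y = 0 -> ker_tensor X (tens w x).
  move=> wY0; have [c ->] := v_gen x.
  exists (\matrix_(l, j) ((w 0 l : R) * c 0 j)) => [|l].
    apply/matrixP => i j; have /matrixP/(_ 0 i) := wY0; rewrite /Y !mxE => wYi.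
    under eq_bigr do rewrite mxE mulrA.
    rewrite -mulr_suml (_ : \sum_l _ = 0) ?mul0r //.
    by rewrite -[RHS]wYi; apply: eq_bigr => l _; rewrite mxE.
  rewrite mxE (_ : row l _ = (w 0 l : R) *: c) ?linearZ //.
  by apply/rowP => j; rewrite !mxE.
have pi_tens w w' x : w *m Y = w' *m Y -> pi (tens w x) = pi (tens w' x).
  move=> ww'; apply/eqP; rewrite -subr_eq0 -raddfB -tensBl; apply/eqP/piE.
  by apply: tens_ker; rewrite mulmxBl ww' subrr.
have [pre preE] := choice (@mx_image_preimage _ _ _ Y).
pose b (y : mx_image Y) (x : M) : A := pi (tens (pre y) x).
have b_bal : balanced b.
  split=> [y y' x | y x x' | r y x]; rewrite /b.
  - rewrite -raddfD -tensDl; apply: pi_tens.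
    by rewrite mulmxDl -!preE GRing.valD.
  - by rewrite tensDr raddfD.
  - rewrite -tensZ; apply: pi_tens.
    by rewrite -scalemxAl -!preE GRing.valZ.
pose gens := [seq (mx_image_of Y 'e_j, v j) | j <- index_enum 'I_n].
have gens0 : tensor_zero [seq (val p.1, p.2) | p <- gens].
  by rewrite -map_comp; exact: tensor_zero_relations relX.
have := M_flat (@val_mx_image_lin _ _ _ Y) val_inj gens0 b_bal.
rewrite big_map => bgens0.
have /piE [Z XZ0 ZE] : pi (\row_l v l) = 0.
  rewrite -sum_tens_delta raddf_sum -[RHS]bgens0; apply: eq_bigr => j _.
  by apply: pi_tens; rewrite -preE.
by exists Z => // l; rewrite -ZE mxE.
Qed.

End Flat.

Section Splitting.
Variables (R : pzRingType) (M : lmodType R) (n : nat) (v : 'I_n -> M).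

Lemma projective_of_comb_section (s : M -> 'rV[R]_n) :
  linear s -> (forall x, comb v (s x) = x) -> projective M.
Proof.
move=> s_lin sK A B g h g_lin h_lin g_onto.
have [a ga] := choice (fun j => g_onto (h (v j))).
exists (fun x => \sum_j s x 0 j *: a j); split.
  move=> r x y; rewrite s_lin scaler_sumr -big_split /=; apply: eq_bigr => j _.
  by rewrite !mxE scalerDl scalerA.
move=> x; rewrite is_lin_sum //; under eq_bigr do rewrite ga.
by rewrite -is_lin_sum // -/(comb v (s x)) sK.
Qed.

Lemma comb_mulmx_fixed (Z : 'M[R]_n) :
  (forall l, comb v (row l Z) = v l) -> forall c, comb v (c *m Z) = comb v c.
Proof.
move=> ZK c; rewrite mulmx_sum_row linear_sum; apply: eq_bigr => l _.
by rewrite linearZ /= ZK.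
Qed.

Lemma comb_section (Z : 'M[R]_n) :
  (forall x, exists c, x = comb v c) ->
  (forall k, comb v k = 0 -> k *m Z = 0) -> (forall l, comb v (row l Z) = v l) ->
  exists s : M -> 'rV[R]_n, linear s /\ forall x, comb v (s x) = x.
Proof.
move=> v_gen relZ ZK; have [c cK] := choice v_gen.
exists (fun x => c x *m Z); split=> [r x y|x]; last by rewrite comb_mulmx_fixed // -cK.
have : (c (r *: x + y) - (r *: c x + c y)) *m Z = 0.
  by apply: relZ; rewrite linearB linearD linearZ /= -!cK subrr.
by rewrite mulmxBl mulmxDl -scalemxAl => /eqP; rewrite subr_eq0 => /eqP.
Qed.

End Splitting.

Theorem flat_fin_gen_projective (R Q : pzRingType) (f : {rmorphism R -> Q}) :
  injective f -> semisimple_ring Q ->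
  forall M : lmodType R, fin_gen M -> flat M -> projective M.
Proof.
move=> f_inj Q_ss M [s s_gen] M_flat; pose v (j : 'I_(size s)) := s`_j.
have v_gen x : exists c, x = comb v c.
  by have [c ->] := s_gen x; exists (\row_j c j); apply: eq_bigr => j _; rewrite mxE.
have [m [X [relX spanX]]] :=
  semisimple_span_image f (comb_kernel_submodule v) Q_ss.
have [Z XZ0 ZK] := flat_relations v_gen M_flat relX.
have relZ k : comb v k = 0 -> k *m Z = 0.
  move=> /spanX [q fkq]; apply/matrixP => i j; apply: f_inj.
  have /matrixP/(_ i j) : map_mx f (k *m Z) = 0.
    by rewrite map_mxM fkq -mulmxA -map_mxM XZ0 map_mx0 mulmx0.
  by rewrite !mxE rmorph0.
have [sec [sec_lin secK]] := comb_section v_gen relZ ZK.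
exact: projective_of_comb_section sec_lin secK.
Qed.

Theorem corollary2p12 (R : pzRingType) :
  (exists M : lmodType R, [/\ fin_gen M, flat M & ~ projective M]) ->
  forall (S : R -> Prop), is_S0 S ->
  forall (Q : pzRingType) (sigma : R -> Q),
    left_quotient_ring S sigma -> ~ semisimple_ring Q.
Proof.
move=> [M [M_fg M_flat M_nproj]] S _ Q sigma [sigma_hom sigma_inj _ _] Q_ss.
by apply: M_nproj; apply: (flat_fin_gen_projective (f := rmorph_of_ring_hom sigma_hom)).
Qed.
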